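(* There exists an instance of $P_n\,|\,\mathrm{conc}, p_j=1\,|\,L_{\max}$ whose conflict graph $G$ has treewidth $1$ and in which every optimal schedule has makespan $C_{\max}=\log n+1$, where $n$ is the number of jobs.
   Context: In $P_n\,|\,\mathrm{conc}, p_j=1\,|\,L_{\max}$, jobs $\{1,\dots,n\}$ have processing time $1$, release time $0$ and integer due dates $d_j$; there is a conflict graph $G$ on the jobs, and a schedule $C:\{1,\dots,n\}\to\mathbb{N}_{\ge1}$ is feasible iff $C(i)\ne C(j)$ for every edge $\{i,j\}$ of $G$. The objective $L_{\max}=\max_j (C_j-d_j)$ is minimized; $C_{\max}=\max_j C_j$. $\log$ is base $2$. *)

From mathcomp Require Import all_boot all_order all_algebra.
Set Implicit Arguments. Unset Strict Implicit. Unset Printing Implicit Defensive.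
Import Order.TTheory GRing.Theory Num.Theory.

Definition simple_graph (V : finType) (G : rel V) : Prop :=
  (forall x, ~~ G x x) /\ (forall x y, G x y = G y x).

(* A tree on 'I_m: nonempty, simple, connected, with exactly m-1 edges
   (counted as 2(m-1) ordered adjacent pairs). *)
Definition is_tree (m : nat) (T : rel 'I_m) : Prop :=
  0 < m /\ simple_graph T /\ (forall i j, connect T i j) /\
  #|[set p : 'I_m * 'I_m | T p.1 p.2]| = 2 * (m - 1).

Definition tree_decomposition (V : finType) (G : rel V)
    (m : nat) (T : rel 'I_m) (B : 'I_m -> {set V}) : Prop :=
  is_tree T /\
  (forall v, exists i, v \in B i) /\
  (forall u v, G u v -> exists i, (u \in B i) && (v \in B i)) /\
  (forall v i j, v \in B i -> v \in B j ->
     connect [rel a b | [&& T a b, v \in B a & v \in B b]] i j).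

Definition tw_le (V : finType) (G : rel V) (k : nat) : Prop :=
  exists m (T : rel 'I_m) (B : 'I_m -> {set V}),
    tree_decomposition G T B /\ forall i, #|B i| <= k.+1.

Definition treewidth_eq (V : finType) (G : rel V) (k : nat) : Prop :=
  tw_le G k /\ forall k', k' < k -> ~ tw_le G k'.

Definition feasible (n : nat) (G : rel 'I_n) (C : 'I_n -> nat) : Prop :=
  (forall j, 0 < C j) /\ (forall i j, G i j -> C i != C j).

Definition Cmax (n : nat) (C : 'I_n -> nat) : nat := \max_(j < n) C j.

Definition Lmax (n : nat) (d : 'I_n -> int) (C : 'I_n -> nat) : int :=
  match [seq ((C j)%:Z - d j)%R | j <- enum 'I_n] with
  | [::] => 0%R
  | x :: s => foldr Num.max x s
  end.

Definition optimal (n : nat) (G : rel 'I_n) (d : 'I_n -> int)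
    (C : 'I_n -> nat) : Prop :=
  feasible G C /\ forall C', feasible G C' -> (Lmax d C <= Lmax d C')%R.

From mathcomp Require Import all_boot all_order all_algebra.
Set Implicit Arguments. Unset Strict Implicit. Unset Printing Implicit Defensive.
Import Order.TTheory GRing.Theory Num.Theory.

(* The witness is the binomial tree on 0 .. 2^k - 1: the parent of v > 0 is v
   with its lowest set bit cleared, so a vertex of rank r (its 2-adic valuation;
   the root 0 has rank k) has a child v + 2^j of every rank j < r.  With due date
   rank + 1 the schedule C v = rank v + 1 is feasible and on time, hence so is
   every optimal schedule; by induction on the rank, a vertex of rank r must then
   avoid the slots 1 .. r of its children and is forced into slot r + 1.  The
   root finishes at k + 1 = log n + 1. *)

Lemma logn_lt_pow p m k : prime p -> 0 < m -> m < p ^ k -> logn p m < k.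
Proof.
move=> p_pr m_gt0 m_lt; rewrite -(ltn_exp2l _ _ (prime_gt1 p_pr)).
exact: leq_ltn_trans (dvdn_leq m_gt0 (pfactor_dvdnn p m)) m_lt.
Qed.

Lemma logn2_odd_mul q j : odd q -> logn 2 (q * 2 ^ j) = j.
Proof.
move=> q_odd.
by rewrite lognM ?(odd_gt0 q_odd) ?expn_gt0 // pfactorK // logn_coprime ?coprime2n.
Qed.

Lemma logn2_add_pow v j : 2 ^ j.+1 %| v -> logn 2 (v + 2 ^ j) = j.
Proof.
by case/dvdnP=> m ->; rewrite expnS mulnA -mulSnr logn2_odd_mul //= oddM andbF.
Qed.

Lemma dvdn_sub_pow_logn2 v : 0 < v -> 2 ^ (logn 2 v).+1 %| v - 2 ^ logn 2 v.
Proof.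
move=> v_gt0; have [q q_odd v_eq] := pfactor_coprime (isT : prime 2) v_gt0.
set t := logn 2 v in v_eq *; rewrite {1}v_eq -{2}[2 ^ t]mul1n -mulnBl.
rewrite expnS dvdn_pmul2r ?expn_gt0 // dvdn2 subn1.
by rewrite coprime2n in q_odd; case: q q_odd {v_eq}.
Qed.

Lemma add_dvdn_leq d a b : d %| a -> d %| b -> a < b -> a + d <= b.
Proof.
move=> /dvdnP[x ->] /dvdnP[y ->]; rewrite -mulSnr.
by case: d => [|d]; rewrite ?muln0 // ltn_pmul2r // leq_pmul2r.
Qed.

Lemma tw_le0_edge (V : finType) (G : rel V) u v : tw_le G 0 -> G u v -> u = v.
Proof.
case=> m [T [B [[_ [_ [edge_in_bag _]]] bag_le1]]] /edge_in_bag[i /andP[u_i v_i]].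
apply/eqP; apply: contraTT (bag_le1 i); rewrite -ltnNge => u_neq_v.
have uv_sub : [set u; v] \subset B i.
  by apply/subsetP => x; rewrite !inE => /orP[] /eqP ->.
by have := subset_leq_card uv_sub; rewrite cards2 u_neq_v.
Qed.

Lemma treewidth_eq1 (V : finType) (G : rel V) u v :
  tw_le G 1 -> G u v -> u != v -> treewidth_eq G 1.
Proof.
move=> tw1 Guv u_neq_v; split=> // k; rewrite ltnS leqn0 => /eqP -> tw0.
by rewrite (tw_le0_edge tw0 Guv) eqxx in u_neq_v.
Qed.

Section ParentTree.

Variables (n : nat) (par : 'I_n -> 'I_n).
Hypothesis n_gt0 : 0 < n.
Let root : 'I_n := Ordinal n_gt0.
Hypothesis par_lt : forall v : 'I_n, 0 < v -> par v < v.
Hypothesis par_root : par root = root.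

Definition parent_rel : rel 'I_n :=
  fun u v => ((0 < v) && (u == par v)) || ((0 < u) && (v == par u)).

Lemma parent_rel_sym : symmetric parent_rel.
Proof. by move=> u v; rewrite /parent_rel orbC. Qed.

Lemma parent_rel_irr v : ~~ parent_rel v v.
Proof.
rewrite /parent_rel orbb; apply/negP => /andP[v_gt0 /eqP v_eq].
by have := par_lt v_gt0; rewrite -v_eq ltnn.
Qed.

Lemma parent_rel_simple : simple_graph parent_rel.
Proof. by split; [exact: parent_rel_irr | exact: parent_rel_sym]. Qed.

Lemma connect_parent_root v : connect parent_rel v root.
Proof.
elim/ltn_ind: (val v) {-2}v (erefl (val v)) => m IH w w_m.
case: (posnP w) => [w0 | w_gt0]; first by rewrite (_ : w = root) //; apply: val_inj.
apply: connect_trans (IH _ _ (par w) erefl); last by rewrite -w_m par_lt.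
by apply: connect1; rewrite /parent_rel w_gt0 eqxx orbT.
Qed.

Lemma parent_rel_connected u v : connect parent_rel u v.
Proof.
apply: connect_trans (connect_parent_root u) _.
by rewrite (sym_connect_sym parent_rel_sym) connect_parent_root.
Qed.

Lemma card_parent_edges : #|[set p : 'I_n * 'I_n | parent_rel p.1 p.2]| = 2 * (n - 1).
Proof.
set P := [set v : 'I_n | 0 < v].
have card_P : #|P| = n - 1.
  have -> : P = [set~ root] by apply/setP => v; rewrite !inE -val_eqE /= lt0n.
  by rewrite cardsC1 card_ord subn1.
have -> : [set p : 'I_n * 'I_n | parent_rel p.1 p.2] =
          [set (par v, v) | v in P] :|: [set (v, par v) | v in P].
  apply/setP => [[a b]]; rewrite !inE /parent_rel /=; apply/orP/orP => [[]|[]].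
  - by case/andP=> b_gt0 /eqP ->; left; apply/imsetP; exists b; rewrite ?inE.
  - by case/andP=> a_gt0 /eqP ->; right; apply/imsetP; exists a; rewrite ?inE.
  - by case/imsetP => v; rewrite inE => v_gt0 [-> ->]; left; rewrite v_gt0 eqxx.
  - by case/imsetP => v; rewrite inE => v_gt0 [-> ->]; right; rewrite v_gt0 eqxx.
rewrite cardsU; have -> : [set (par v, v) | v in P] :&: [set (v, par v) | v in P] = set0.
  apply/setP => [[a b]]; rewrite !inE; apply/negP => /andP[].
  case/imsetP => v; rewrite inE => v_gt0 [-> ->].
  case/imsetP => w; rewrite inE => w_gt0 [par_v_eq v_eq].
  by have := par_lt w_gt0; rewrite -v_eq -par_v_eq ltnNge ltnW ?par_lt.
by rewrite cards0 subn0 !card_imset ?card_P ?addnn ?mul2n // => x y [].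
Qed.

Lemma parent_rel_tree : is_tree parent_rel.
Proof.
split=> //; split; first exact: parent_rel_simple.
by split; [exact: parent_rel_connected | exact: card_parent_edges].
Qed.

Definition parent_bag (v : 'I_n) : {set 'I_n} := [set v; par v].

Lemma parent_tree_decomposition : tree_decomposition parent_rel parent_rel parent_bag.
Proof.
split; first exact: parent_rel_tree.
split; first by move=> v; exists v; rewrite !inE eqxx.
split.
  move=> u v /orP[] /andP[_ /eqP ->]; [exists v | exists u];
  by rewrite !inE !eqxx orbT.
move=> x i j.
set R := [rel a b | [&& parent_rel a b, x \in parent_bag a & x \in parent_bag b]].
have x_x : x \in parent_bag x by rewrite !inE eqxx.
suff to_x w : x \in parent_bag w -> connect R w x /\ connect R x w.
  by move=> /to_x[+ _] /to_x[_]; apply: connect_trans.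
rewrite !inE => /orP[/eqP -> | /eqP x_par]; first by split; apply: connect0.
case: (posnP w) => [w0 | w_gt0].
  rewrite x_par (_ : w = root) ?par_root; last exact: val_inj.
  by split; apply: connect0.
have x_w : x \in parent_bag w by rewrite !inE x_par eqxx orbT.
by split; apply: connect1; rewrite /= x_x x_w /parent_rel w_gt0 x_par eqxx ?orbT.
Qed.

Lemma parent_rel_tw_le1 : tw_le parent_rel 1.
Proof.
exists n, parent_rel, parent_bag; split; first exact: parent_tree_decomposition.
by move=> i; rewrite cards2; case: (_ != _).
Qed.

End ParentTree.

Lemma foldr_max_ge (x : int) s y : y \in x :: s -> (y <= foldr Num.max x s)%R.
Proof.
elim: s y => [|a s IH] y /=; first by rewrite inE => /eqP ->.
rewrite !inE le_max => /or3P[/eqP -> | /eqP -> | y_s].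
- by rewrite IH ?orbT ?mem_head.
- by rewrite lexx.
- by rewrite IH ?orbT // inE y_s orbT.
Qed.

Lemma foldr_max_le (x : int) s b :
  (x <= b)%R -> all (fun y => y <= b)%R s -> (foldr Num.max x s <= b)%R.
Proof. by move=> x_b; elim: s => //= a s IH /andP[a_b /IH]; rewrite ge_max a_b. Qed.

Lemma Lmax_ge n (d : 'I_n -> int) C j : ((C j)%:Z - d j <= Lmax d C)%R.
Proof.
have : ((C j)%:Z - d j)%R \in [seq ((C j)%:Z - d j)%R | j <- enum 'I_n].
  by apply: map_f; rewrite mem_enum.
by rewrite /Lmax; case: [seq _ | _ <- _] => // x s; apply: foldr_max_ge.
Qed.

(* The hypothesis [0 <= b] covers [n = 0], where [Lmax] is [0]. *)
Lemma Lmax_le n (d : 'I_n -> int) C (b : int) :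
  (forall j, ((C j)%:Z - d j <= b)%R) -> (0 <= b)%R -> (Lmax d C <= b)%R.
Proof.
move=> late_b b_ge0.
have : all (fun y => y <= b)%R [seq ((C j)%:Z - d j)%R | j <- enum 'I_n].
  by apply/allP => y /mapP[j _ ->].
by rewrite /Lmax; case: [seq _ | _ <- _] => //= x s /andP[]; apply: foldr_max_le.
Qed.

Lemma optimal_on_time n (G : rel 'I_n) d C C0 :
  optimal G d C -> feasible G C0 -> (forall j, (C0 j)%:Z <= d j)%R ->
  forall j, ((C j)%:Z <= d j)%R.
Proof.
move=> [_ C_min] /C_min C_le C0_on_time j; rewrite -subr_le0.
apply: le_trans (Lmax_ge d C j) (le_trans C_le _).
by apply: Lmax_le => // i; rewrite subr_le0.
Qed.

Section BinomialTree.

Variable k : nat.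
Notation n := (2 ^ k).

Definition binom_root : 'I_n := Ordinal (expn_gt0 2 k).

Definition binom_par (v : 'I_n) : 'I_n :=
  Ordinal (leq_ltn_trans (leq_subr (2 ^ logn 2 v) v) (ltn_ord v)).

Definition binom_tree : rel 'I_n := parent_rel binom_par.

Definition binom_rank (v : 'I_n) : nat := if val v == 0 then k else logn 2 v.

Lemma binom_par_lt (v : 'I_n) : 0 < v -> binom_par v < v.
Proof. by move=> v_gt0; rewrite /= ltn_subrL expn_gt0 v_gt0. Qed.

Lemma binom_par_root : binom_par binom_root = binom_root.
Proof. exact: val_inj. Qed.

Lemma binom_rank_le (v : 'I_n) : binom_rank v <= k.
Proof.
rewrite /binom_rank; case: eqP => // /eqP v_neq0.
by apply/ltnW/logn_lt_pow; rewrite ?lt0n.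
Qed.

Lemma pow2_dvdn_rank (v : 'I_n) j : j <= k -> (2 ^ j %| v) = (j <= binom_rank v).
Proof.
rewrite /binom_rank; case: eqP => [-> | /eqP v_neq0] j_le; first by rewrite dvdn0 j_le.
by rewrite pfactor_dvdn // lt0n.
Qed.

Lemma binom_rank_par (v : 'I_n) : 0 < v -> binom_rank v < binom_rank (binom_par v).
Proof.
move=> v_gt0; have logn_v_lt := logn_lt_pow (isT : prime 2) v_gt0 (ltn_ord v).
rewrite {1}/binom_rank (negbTE (lt0n_neq0 v_gt0)) -pow2_dvdn_rank //.
exact: dvdn_sub_pow_logn2.
Qed.

Lemma binom_tree_rank_neq (u v : 'I_n) : binom_tree u v -> binom_rank u != binom_rank v.
Proof.
by case/orP=> /andP[/binom_rank_par + /eqP ->]; rewrite neq_ltn => ->; rewrite ?orbT.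
Qed.

Lemma binom_child (v : 'I_n) j :
  j < binom_rank v -> exists u, binom_tree v u && (binom_rank u == j).
Proof.
move=> j_lt; have j_lt_k := leq_trans j_lt (binom_rank_le v).
have dvd_v : 2 ^ j.+1 %| v by rewrite pow2_dvdn_rank.
have u_lt : v + 2 ^ j < n.
  apply: leq_trans (add_dvdn_leq dvd_v (dvdn_exp2l 2 j_lt_k) (ltn_ord v)).
  by rewrite ltn_add2l ltn_exp2l.
have u_gt0 : 0 < v + 2 ^ j by rewrite addn_gt0 expn_gt0 orbT.
exists (Ordinal u_lt); apply/andP; split.
  rewrite /binom_tree /parent_rel /= u_gt0; apply/orP; left; apply/eqP/val_inj.
  by rewrite /= logn2_add_pow // addnK.
by rewrite /binom_rank /= (negbTE (lt0n_neq0 u_gt0)) logn2_add_pow.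
Qed.

Lemma binom_tree_simple : simple_graph binom_tree.
Proof. exact: parent_rel_simple binom_par_lt. Qed.

Lemma binom_tree_treewidth : 0 < k -> treewidth_eq binom_tree 1.
Proof.
move=> k_gt0; have one_lt : 1 < n by rewrite -{1}(expn0 2) ltn_exp2l.
apply: (@treewidth_eq1 _ _ (binom_par (Ordinal one_lt)) (Ordinal one_lt)).
- exact: parent_rel_tw_le1 binom_par_lt binom_par_root.
- by rewrite /binom_tree /parent_rel eqxx.
- by rewrite -val_eqE.
Qed.

Definition binom_due (v : 'I_n) : int := (binom_rank v).+1%:Z.

Lemma binom_rank_schedule_feasible : feasible binom_tree (fun v => (binom_rank v).+1).
Proof. by split=> // u v /binom_tree_rank_neq; rewrite eqSS. Qed.

(* By induction on the rank: the children of [v] fill the slots [1 .. rank v]. *)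
Lemma binom_on_time_schedule C :
  feasible binom_tree C -> (forall v, C v <= (binom_rank v).+1) ->
  forall v, C v = (binom_rank v).+1.
Proof.
move=> [C_gt0 C_conflict] C_le v.
move r_eq : (binom_rank v) => r; elim/ltn_ind: r v r_eq => r IH v r_eq.
apply/eqP; rewrite eqn_leq -{1}r_eq C_le /= ltnNge; apply/negP => C_le_r.
have j_lt : (C v).-1 < binom_rank v by rewrite r_eq prednK ?C_gt0.
have [u /andP[vu /eqP u_rank]] := binom_child j_lt; rewrite r_eq in j_lt.
by have := C_conflict _ _ vu; rewrite (IH _ j_lt u u_rank) prednK ?C_gt0 ?eqxx.
Qed.

Lemma binom_optimal_schedule C :
  optimal binom_tree binom_due C -> forall v, C v = (binom_rank v).+1.
Proof.
move=> C_opt; have [C_feasible _] := C_opt.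
apply: binom_on_time_schedule => // v; rewrite -lez_nat.
by apply: optimal_on_time C_opt binom_rank_schedule_feasible _ v => u.
Qed.

Lemma Cmax_rank_schedule C : (forall v, C v = (binom_rank v).+1) -> Cmax C = k.+1.
Proof.
move=> C_eq; apply/eqP; rewrite eqn_leq; apply/andP; split.
  by apply/bigmax_leqP => v _; rewrite C_eq ltnS binom_rank_le.
by apply: leq_trans (leq_bigmax binom_root); rewrite C_eq /binom_rank.
Qed.

End BinomialTree.

Theorem lemma4 :
  forall N : nat,
  exists (n : nat) (G : rel 'I_n) (d : 'I_n -> int),
    N <= n /\ simple_graph G /\ treewidth_eq G 1 /\
    forall C : 'I_n -> nat, optimal G d C ->
      0 < Cmax C /\ 2 ^ (Cmax C).-1 = n.
Proof.
move=> N; exists (2 ^ N.+1), (@binom_tree N.+1), (@binom_due N.+1).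
split; first by apply/ltnW/(ltn_trans (ltnSn N))/ltn_expl.
split; first exact: binom_tree_simple.
split; first exact: binom_tree_treewidth.
by move=> C /binom_optimal_schedule /Cmax_rank_schedule ->.
Qed.
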